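(* Fix $\vartheta_1\in(0,\pi/2)$ and an integer $k\ge0$. Then $$\min_{\eta\in I_k}\Phi(\eta+\pi)\ \ge\ \min_{\eta\in I_k}\Phi(\eta)+\pi(1-\cos\vartheta_1).$$
   Context: For integers $k\ge0$ let $I_k=[\vartheta_1+k\pi,(k+1)\pi-\vartheta_1]$ (note $\eta\in I_k$ iff $\eta+\pi\in I_{k+1}$). For $\eta\in I_k$ set $\gamma(\eta)=\sqrt{1-\sin^2\vartheta_1/\sin^2\eta}$ and $$\Phi(\eta)=-\eta\,\gamma(\eta)+k\pi+\arccos\Big(\frac{\cos(\eta-k\pi)}{\cos\vartheta_1}\Big),\qquad\arccos\in[0,\pi].$$ *)

From Stdlib Require Import Reals.
Open Scope R_scope.

Definition Ik (th1 : R) (k : nat) (eta : R) : Prop :=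
  th1 + INR k * PI <= eta <= (INR k + 1) * PI - th1.

Definition gam (th1 eta : R) : R :=
  sqrt (1 - (sin th1)^2 / (sin eta)^2).

(* Phi(eta) for eta in I_k (k is the index of the interval containing eta);
   Stdlib's acos takes values in [0, PI]. *)
Definition Phi (th1 : R) (k : nat) (eta : R) : R :=
  - eta * gam th1 eta + INR k * PI + acos (cos (eta - INR k * PI) / cos th1).

Definition is_min_on (S : R -> Prop) (f : R -> R) (m : R) : Prop :=
  (exists x, S x /\ f x = m) /\ (forall x, S x -> m <= f x).

(* Shifting eta by PI moves it from I_k to I_(k+1); sin^2 eta is unchanged, hence so is
   gamma, while the cosine argument picks up two sign changes and the additive
   constant grows by PI.  Thus Phi(eta + PI) = Phi(eta) + PI (1 - gamma(eta)), and
   gamma <= cos th1 because sin^2 eta <= 1.  Both minima exist since Phi is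
   continuous on the compact interval I_k, where sin eta does not vanish. *)

From Stdlib Require Import Reals Lra.
Open Scope R_scope.

Lemma continuity_sqrt : continuity sqrt.
Proof.
  intros x; destruct (Rle_lt_dec 0 x) as [Hx | Hx].
  - exact (continuity_pt_sqrt x Hx).
  - apply (continuity_pt_locally_ext (fun _ => 0) sqrt (- x) x); [lra | | reg].
    intros y Hy; apply Rabs_def2 in Hy; rewrite sqrt_neg_0; lra.
Qed.

(* [acos_atan] holds for every [x > 0], also beyond 1 where [acos] and [sqrt] return
   their clamped values 0, so it describes [acos] on a whole neighbourhood of [y]. *)
Lemma continuity_pt_acos_ge_1 y : 1 <= y -> continuity_pt acos y.
Proof.
  intros Hy.
  apply (continuity_pt_locally_ext (fun x => atan (sqrt (1 - x²) / x)) acos 1 y); [lra | |].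
  - intros z Hz; apply Rabs_def2 in Hz; rewrite acos_atan; lra.
  - apply (continuity_pt_comp (fun x => sqrt (1 - x²) / x) atan).
    + apply continuity_pt_div; [| reg | lra].
      apply (continuity_pt_comp (fun x => 1 - x²) sqrt); [reg | apply continuity_sqrt].
    + apply derivable_continuous_pt, derivable_pt_atan.
Qed.

Lemma continuity_acos : continuity acos.
Proof.
  intros y; destruct (Rle_lt_dec 1 y) as [Hy | Hy]; [exact (continuity_pt_acos_ge_1 y Hy) |].
  destruct (Rle_lt_dec y (-1)) as [Hy' | Hy'].
  - apply (continuity_pt_locally_ext (fun x => PI - acos (- x)) acos 1 y); [lra | |].
    + intros z _; rewrite acos_opp; ring.
    + apply continuity_pt_minus; [reg |].
      apply (continuity_pt_comp (fun x => - x) acos); [reg |].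
      apply continuity_pt_acos_ge_1; lra.
  - apply derivable_continuous_pt, derivable_pt_acos; lra.
Qed.

Lemma continuity_pt_Phi th1 k eta :
  sin eta <> 0 -> cos th1 <> 0 -> continuity_pt (Phi th1 k) eta.
Proof.
  intros Hsin Hcos; unfold Phi, gam.
  apply continuity_pt_plus.
  - apply continuity_pt_plus; [| reg].
    apply continuity_pt_mult; [reg |].
    apply (continuity_pt_comp (fun x => 1 - sin th1 ^ 2 / sin x ^ 2) sqrt);
      [reg; now apply pow_nonzero | apply continuity_sqrt].
  - apply (continuity_pt_comp (fun x => cos (x - INR k * PI) / cos th1) acos);
      [reg | apply continuity_acos].
Qed.

Lemma sin_add_PI_sqr x : sin (x + PI) ^ 2 = sin x ^ 2.
Proof. rewrite neg_sin; ring. Qed.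

Lemma sin_add_nat_PI_sqr x k : sin (x + INR k * PI) ^ 2 = sin x ^ 2.
Proof.
  induction k as [| k IHk]; [rewrite Rmult_0_l, Rplus_0_r; reflexivity |].
  rewrite S_INR, <- IHk, <- (sin_add_PI_sqr (x + INR k * PI)).
  f_equal; f_equal; ring.
Qed.

Lemma sin_neq_0_of_Ik th1 k eta : 0 < th1 -> Ik th1 k eta -> sin eta <> 0.
Proof.
  intros Hth1 [Hlo Hhi] Hsin.
  assert (Hpos : 0 < sin (eta - INR k * PI)) by (apply sin_gt_0; lra).
  pose proof (sin_add_nat_PI_sqr (eta - INR k * PI) k) as Hsqr.
  replace (eta - INR k * PI + INR k * PI) with eta in Hsqr by ring.
  rewrite Hsin in Hsqr; nra.
Qed.

Lemma gam_add_PI th1 eta : gam th1 (eta + PI) = gam th1 eta.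
Proof. unfold gam; rewrite sin_add_PI_sqr; reflexivity. Qed.

Lemma gam_le_cos th1 eta : 0 <= cos th1 -> sin eta <> 0 -> gam th1 eta <= cos th1.
Proof.
  intros Hcos Hsin; unfold gam.
  rewrite <- (sqrt_pow2 (cos th1) Hcos).
  apply sqrt_le_1_alt.
  assert (Hs : 0 < sin eta ^ 2) by (rewrite <- Rsqr_pow2; exact (Rsqr_pos_lt _ Hsin)).
  pose proof (sin2_cos2 th1); pose proof (sin2_cos2 eta); rewrite !Rsqr_pow2 in *.
  assert (sin th1 ^ 2 <= sin th1 ^ 2 / sin eta ^ 2).
  { apply (Rmult_le_reg_r (sin eta ^ 2) _ _ Hs).
    unfold Rdiv; rewrite Rmult_assoc, Rinv_l, Rmult_1_r by lra; nra. }
  lra.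
Qed.

Lemma Phi_succ_add_PI th1 k eta :
  Phi th1 (S k) (eta + PI) = Phi th1 k eta + PI * (1 - gam th1 eta).
Proof.
  unfold Phi; rewrite gam_add_PI, S_INR.
  replace (eta + PI - (INR k + 1) * PI) with (eta - INR k * PI) by ring.
  ring.
Qed.

Lemma is_min_on_segment a b f :
  a <= b -> (forall x, a <= x <= b -> continuity_pt f x) ->
  exists m, is_min_on (fun x => a <= x <= b) f m.
Proof.
  intros Hab Hf.
  destruct (continuity_ab_min f a b Hab Hf) as [x [Hmin Hx]].
  exists (f x); split; [exists x; split | intros y Hy; apply Hmin]; auto.
Qed.

Lemma is_min_on_le_add (D : R -> Prop) f g c m1 m2 :
  (forall x, D x -> g x + c <= f x) ->
  is_min_on D f m1 -> is_min_on D g m2 -> m2 + c <= m1.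
Proof.
  intros Hfg [[x [Hx <-]] _] [_ Hm2].
  specialize (Hm2 x Hx); specialize (Hfg x Hx); lra.
Qed.

Theorem lemma5p24 (th1 : R) (k : nat) (Hth1 : 0 < th1 < PI / 2) :
  exists m1 m2 : R,
    is_min_on (Ik th1 k) (fun eta => Phi th1 (S k) (eta + PI)) m1 /\
    is_min_on (Ik th1 k) (Phi th1 k) m2 /\
    m1 >= m2 + PI * (1 - cos th1).
Proof.
  assert (Hcos : 0 < cos th1) by (apply cos_gt_0; lra).
  assert (Hsin : forall eta, Ik th1 k eta -> sin eta <> 0)
    by (intros eta; apply sin_neq_0_of_Ik; lra).
  assert (Hnonempty : th1 + INR k * PI <= (INR k + 1) * PI - th1) by lra.
  destruct (is_min_on_segment _ _ (fun eta => Phi th1 (S k) (eta + PI)) Hnonempty)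
    as [m1 Hm1].
  { intros eta Heta.
    apply (continuity_pt_comp (fun x => x + PI) (Phi th1 (S k))); [reg |].
    apply continuity_pt_Phi; [rewrite neg_sin; specialize (Hsin eta Heta); lra | lra]. }
  destruct (is_min_on_segment _ _ (Phi th1 k) Hnonempty) as [m2 Hm2].
  { intros eta Heta; apply continuity_pt_Phi; [apply Hsin, Heta | lra]. }
  exists m1, m2; split; [exact Hm1 | split; [exact Hm2 |]].
  apply Rle_ge; refine (is_min_on_le_add _ _ _ _ _ _ _ Hm1 Hm2).
  intros eta Heta; rewrite Phi_succ_add_PI.
  pose proof (gam_le_cos th1 eta (Rlt_le _ _ Hcos) (Hsin eta Heta)).
  pose proof PI_RGT_0; nra.
Qed.
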